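(* Let $p_1,\dots,p_n$ be distinct primes and $G=C_{p_1\cdots p_n}$ the cyclic group of order $p_1\cdots p_n$. Then the width of $G$ equals $n$.
   Context: For a finite group $G$, an arrow is a pair $(H,K)$ of subgroups with $H\leqslant K$; identity arrows are those with $H=K$. A $G$-transfer system is a set of arrows containing all identities and closed under composition ($(H,K),(K,L)\Rightarrow(H,L)$), conjugation ($(H,K)\Rightarrow(gHg^{-1},gKg^{-1})$) and restriction ($(H,K)$ and $L\leqslant K\Rightarrow(H\cap L,L)$). For a set $S$ of non-identity arrows, $\langle S\rangle$ is the smallest transfer system containing $S$. A minimal generating set of a transfer system $\mathsf{T}$ is a set $S\subseteq\mathsf{T}$ of non-identity arrows with $\langle S\rangle=\mathsf{T}$ and $\langle S\setminus\{s\}\rangle\neq\mathsf{T}$ for all $s\in S$; all such sets have the same cardinality $\mathfrak{m}(\mathsf{T})$. The width of $G$ is $\mathfrak{m}$ of the complete transfer system (the transfer system consisting of all arrows). *)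

From mathcomp Require Import all_boot all_fingroup all_solvable.
Set Implicit Arguments. Unset Strict Implicit. Unset Printing Implicit Defensive.
Local Open Scope group_scope.

Section TransferSystems.
Variable gT : finGroupType.

Definition arrow_t := ({set gT} * {set gT})%type.

Definition is_subgroup (G H : {set gT}) : bool := group_set H && (H \subset G).

Definition is_arrow (G : {set gT}) (a : arrow_t) : bool :=
  [&& is_subgroup G a.1, is_subgroup G a.2 & a.1 \subset a.2].

Definition transfer_system (G : {set gT}) (T : {set arrow_t}) : bool :=
  [&& [forall a in T, is_arrow G a],
      [forall H : {set gT}, is_subgroup G H ==> ((H, H) \in T)],
      [forall a in T, forall b in T, (a.2 == b.1) ==> ((a.1, b.2) \in T)],
      [forall a in T, forall g in G, (a.1 :^ g, a.2 :^ g) \in T] &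
      [forall a in T, forall L : {set gT},
         (is_subgroup G L && (L \subset a.2)) ==> ((a.1 :&: L, L) \in T)]].

Definition gen_ts (G : {set gT}) (S : {set arrow_t}) : {set arrow_t} :=
  [set a | [forall T : {set arrow_t},
              (transfer_system G T && (S \subset T)) ==> (a \in T)]].

Definition complete_ts (G : {set gT}) : {set arrow_t} := [set a | is_arrow G a].

Definition minimal_gen_set (G : {set gT}) (S T : {set arrow_t}) : Prop :=
  [/\ S \subset T,
      (forall a, a \in S -> a.1 != a.2),
      gen_ts G S = T &
      (forall s, s \in S -> gen_ts G (S :\ s) != T)].

Definition mgen_card (G : {set gT}) (T : {set arrow_t}) (m : nat) : Prop :=
  (exists S, minimal_gen_set G S T) /\
  (forall S, minimal_gen_set G S T -> #|S| = m).

Definition width_is (G : {set gT}) (m : nat) : Prop :=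
  mgen_card G (complete_ts G) m.

End TransferSystems.

From mathcomp Require Import all_boot all_fingroup all_solvable.
Set Implicit Arguments. Unset Strict Implicit. Unset Printing Implicit Defensive.
Local Open Scope group_scope.

(* The arrows (M, G) with M a maximal normal subgroup are indispensable: since
   nothing lies strictly between M and G and M is normal, (M, G) is neither a
   composite, a conjugate nor a restriction of other arrows, so removing it from
   the complete transfer system leaves a transfer system.  When G is cyclic of
   squarefree order they also suffice: given H < K <= G, pick a prime q dividing
   |K : H| and the subgroup M of index q; then H <= M but K is not contained in M,
   so restricting (M, G) to K gives (M :&: K, K) with H <= M :&: K < K, and
   induction on |K| followed by composition yields (H, K).  Hence these arrows,
   one per prime divisor of |G|, form the unique minimal generating set. *)

Section TransferSystemTheory.
Variable gT : finGroupType.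
Implicit Types (G H K L : {set gT}) (S T A : {set arrow_t gT}).

Lemma transfer_systemP G T :
  reflect [/\ {in T, forall a, is_arrow G a},
              forall H, is_subgroup G H -> (H, H) \in T,
              forall H K L, (H, K) \in T -> (K, L) \in T -> (H, L) \in T,
              forall H K g, (H, K) \in T -> g \in G -> (H :^ g, K :^ g) \in T
            & forall H K L, (H, K) \in T -> is_subgroup G L -> L \subset K ->
                (H :&: L, L) \in T]
          (transfer_system G T).
Proof.
apply: (iffP and5P) => [[/forall_inP ar /forallP idT /forall_inP compT
                         /forall_inP conjT /forall_inP resT] |
                        [ar idT compT conjT resT]]; split.
- exact: ar.
- by move=> H; apply/implyP/idT.
- by move=> H K L HK KL; apply: implyP (forall_inP (compT _ HK) _ KL) (eqxx _).
- by move=> H K g HK; apply: forall_inP (conjT _ HK) g.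
- by move=> H K L HK sL sLK; apply: implyP (forallP (resT _ HK) L) _; rewrite sL.
- exact/forall_inP.
- by apply/forallP=> H; apply/implyP/idT.
- apply/forall_inP=> -[H K] HK; apply/forall_inP=> -[K' L] KL.
  by apply/implyP=> /eqP /= eKK'; apply: compT HK _; rewrite eKK'.
- by apply/forall_inP=> -[H K] HK; apply/forall_inP=> g; apply: conjT.
- by apply/forall_inP=> -[H K] HK; apply/forallP=> L; apply/implyP=> /andP[]; apply: resT.
Qed.

Lemma is_subgroup_group G (H : {group gT}) : is_subgroup G H = (H \subset G).
Proof. by rewrite /is_subgroup groupP. Qed.

Lemma is_subgroupP G H :
  reflect (exists2 K : {group gT}, H = K & K \subset G) (is_subgroup G H).
Proof.
apply: (iffP andP) => [[gH sHG] | [K -> sKG]]; last by rewrite groupP.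
by exists (Group gH).
Qed.

Lemma gen_ts_min G S T : transfer_system G T -> S \subset T -> gen_ts G S \subset T.
Proof.
move=> tsT sST; apply/subsetP=> a; rewrite inE => /forallP /(_ T).
by rewrite tsT sST; apply.
Qed.

Lemma sub_gen_ts G S : S \subset gen_ts G S.
Proof.
apply/subsetP=> a Sa; rewrite inE; apply/forallP=> T; apply/implyP=> /andP[_ sST].
exact: subsetP sST a Sa.
Qed.

Lemma gen_tsS G S1 S2 : S1 \subset S2 -> gen_ts G S1 \subset gen_ts G S2.
Proof.
move=> sS12; apply/subsetP=> a; rewrite !inE => /forallP genS1; apply/forallP=> T.
by apply/implyP=> /andP[tsT sS2T]; apply: implyP (genS1 T) _; rewrite tsT (subset_trans sS12).
Qed.

Lemma mgen_card_least G T A :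
    {in A, forall a, a.1 != a.2} -> gen_ts G A = T ->
    (forall S, gen_ts G S = T -> A \subset S) ->
  mgen_card G T #|A|.
Proof.
move=> nidA genA leastA; split.
  exists A; split=> //; first by rewrite -genA sub_gen_ts.
  by move=> a Aa; apply/eqP=> /leastA /subsetP /(_ a Aa); rewrite !inE eqxx.
move=> S [_ _ genS minS]; suff -> : S = A by [].
apply/eqP; rewrite eqEsubset leastA // andbT.
apply/subsetP=> s Ss; apply: contraT => notAs; case/negP: (minS s Ss).
rewrite eqEsubset -{1}genS gen_tsS ?subD1set //= -{1}genA gen_tsS //.
apply/subsetP=> a Aa; rewrite in_setD1 (subsetP (leastA S genS)) // andbT.
by apply: contraNneq notAs => <-.
Qed.

Lemma complete_ts_transfer (G : {group gT}) : transfer_system G (complete_ts G).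
Proof.
apply/transfer_systemP; split.
- by move=> a; rewrite inE.
- by move=> H sH; rewrite inE /is_arrow /= sH subxx.
- move=> H K L; rewrite !inE /is_arrow /= => /and3P[-> _ sHK] /and3P[_ -> sKL].
  exact: subset_trans sHK sKL.
- move=> H K g; rewrite !inE /is_arrow /is_subgroup /= !group_setJ conjSg.
  move=> /and3P[/andP[-> sHG] /andP[-> sKG] ->] gG.
  by rewrite -(conjGid gG) !conjSg sHG sKG.
- move=> H K L; rewrite !inE /is_arrow /= => /and3P[/is_subgroupP[H' -> _] _ _].
  move=> /is_subgroupP[L' -> sLG] _.
  by rewrite is_subgroup_group (is_subgroup_group G (H' :&: L')%G) subsetIr
             (subset_trans (subsetIr _ _) sLG) sLG.
Qed.

Lemma complete_tsD1_transfer (G M : {group gT}) :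
  maximal M G -> M <| G -> transfer_system G (complete_ts G :\ (gval M, gval G)).
Proof.
move=> maxM nMG; have /transfer_systemP[arC idC compC conjC resC] := complete_ts_transfer G.
have /maximal_eqP[_ betweenMG] : maximal_eq M G by rewrite /maximal_eq maxM orbT.
apply/transfer_systemP; split.
- by move=> a /setD1P[_ /arC].
- move=> H sH; rewrite in_setD1 idC // andbT; apply/eqP=> -[eHM eHG].
  by move: (maxgroupp maxM); rewrite -eHM eHG properxx.
- move=> H K L /setD1P[nHK HK] /setD1P[nKL KL]; rewrite in_setD1 (compC _ K) // andbT.
  apply/eqP=> -[eHM eLG]; move: (arC _ HK); rewrite /is_arrow eHM /=.
  case/and3P=> _ /is_subgroupP[K' eK sKG] sMK; rewrite eK in nHK nKL sMK.
  have [eKM | eKG] := betweenMG K' sMK sKG.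
    by case/eqP: nKL; rewrite eKM eLG.
  by case/eqP: nHK; rewrite eHM eKG.
- move=> H K g /setD1P[nHK HK] gG; rewrite in_setD1 conjC // andbT.
  apply: contraNneq nHK => -[eHM eKG].
  rewrite -(conjsgK g H) -(conjsgK g K) eHM eKG (conjGid (groupVr gG)).
  by rewrite (normsP (normal_norm nMG) _ (groupVr gG)).
- move=> H K L /setD1P[nHK HK] sL sLK; rewrite in_setD1 (resC _ K) // andbT.
  apply: contraNneq nHK => -[eHM eLG].
  move: (arC _ HK); rewrite /is_arrow /is_subgroup /= => /and3P[_ /andP[_ sKG] sHK].
  have eKG : K = G by apply/eqP; rewrite eqEsubset sKG -eLG.
  by rewrite -eHM eLG eKG (setIidPl (subset_trans sHK sKG)).
Qed.

Lemma maximal_arrow_mem_gen (G M : {group gT}) S :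
  maximal M G -> M <| G -> gen_ts G S = complete_ts G -> (gval M, gval G) \in S.
Proof.
move=> maxM nMG genS; apply: contraT => notSM.
have sSD : S \subset complete_ts G :\ (gval M, gval G).
  apply/subsetP=> a Sa; rewrite in_setD1 -genS (subsetP (sub_gen_ts G S)) // andbT.
  by apply: contraNneq notSM => <-.
have MG : (gval M, gval G) \in complete_ts G.
  by rewrite inE /is_arrow /= !is_subgroup_group subxx proper_sub ?(maxgroupp maxM).
rewrite -genS in MG.
have := subsetP (gen_ts_min (complete_tsD1_transfer maxM nMG) sSD) _ MG.
by rewrite in_setD1 eqxx.
Qed.

Lemma gen_ts_separating (G : {group gT}) A :
    A \subset complete_ts G ->
    (forall H K : {group gT}, H \proper K -> K \subset G ->
       exists2 M : {group gT}, (gval M, gval G) \in A & (H \subset M) && ~~ (K \subset M)) ->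
  gen_ts G A = complete_ts G.
Proof.
move=> sAC sepA; apply/eqP; rewrite eqEsubset gen_ts_min ?complete_ts_transfer //=.
apply/subsetP=> -[H0 K0]; rewrite inE /is_arrow /=.
case/and3P=> /is_subgroupP[H -> _] /is_subgroupP[K -> sKG] sHK.
rewrite inE; apply/forallP=> T; apply/implyP=> /andP[tsT sAT].
have /transfer_systemP[_ idT compT _ resT] := tsT.
have [m leKm] := ubnP #|K|; elim: m => // m IHm in H K leKm sHK sKG *.
have [-> | neHK] := eqVneq (gval H) (gval K); first by rewrite idT ?is_subgroup_group.
have prHK : H \proper K by rewrite properEneq neHK.
have [M AM /andP[sHM nsKM]] := sepA H K prHK sKG.
have subgK : is_subgroup G K by rewrite is_subgroup_group.
have MK_K : (gval M :&: K, gval K) \in T := resT _ _ _ (subsetP sAT _ AM) subgK sKG.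
have ltMK : #|M :&: K| < #|K|.
  rewrite proper_card // properEneq subsetIr andbT.
  by apply: contraNneq nsKM => <-; apply: subsetIl.
apply: compT (IHm H (M :&: K)%G _ _ _) MK_K.
- exact: leq_trans ltMK leKm.
- by rewrite subsetI sHM sHK.
- exact: subset_trans (subsetIr _ _) sKG.
Qed.

End TransferSystemTheory.

Section CyclicSquarefree.
Variables (gT : finGroupType) (x : gT).

Lemma index_cycleX p : p %| #[x] -> #|<[x]> : <[x ^+ p]>| = p.
Proof.
by move=> p_x; rewrite -divgS ?cycleX // -!orderE orderXdiv // divnA // mulKn.
Qed.

Lemma maximal_cycleX p : prime p -> p %| #[x] -> maximal <[x ^+ p]> <[x]>.
Proof. by move=> p_pr p_x; rewrite p_index_maximal ?cycleX ?index_cycleX. Qed.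

Hypothesis sqfree_x : forall p, prime p -> ~~ (p ^ 2 %| #[x]).

Lemma cycleX_separating (H K : {group gT}) :
    H \proper K -> K \subset <[x]> ->
  exists2 p, p \in primes #[x] & (H \subset <[x ^+ p]>) && ~~ (K \subset <[x ^+ p]>).
Proof.
move=> prHK sKx; have sHK := proper_sub prHK; set p := pdiv #|K : H|.
have p_pr : prime p by rewrite pdiv_prime // indexg_gt1 proper_subn.
have p_K : p %| #|K| := dvdn_trans (pdiv_dvd _) (dvdn_indexg _ _).
have K_x : #|K| %| #[x] := cardSg sKx.
have p_x : p %| #[x] := dvdn_trans p_K K_x.
have subX (L : {group gT}) : L \subset <[x]> -> (L \subset <[x ^+ p]>) = (#|L| * p %| #[x]).
  move=> sLx; rewrite -(cardSg_cyclic (cycle_cyclic x) sLx (cycleX x p)).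
  by rewrite -orderE orderXdiv // dvdn_divRL.
exists p; first by rewrite mem_primes p_pr order_gt0.
rewrite !subX ?(subset_trans sHK) // (dvdn_trans _ K_x) /=; last first.
  by rewrite -(Lagrange sHK) dvdn_pmul2l ?pdiv_dvd.
apply: contra (sqfree_x p_pr) => Kp_x.
by rewrite -mulnn (dvdn_trans _ Kp_x) ?dvdn_mul.
Qed.

Definition cycle_maximal_arrows : {set arrow_t gT} :=
  [set:: [seq (<[x ^+ p]> : {set gT}, <[x]> : {set gT}) | p <- primes #[x]]].

Lemma card_cycle_maximal_arrows : #|cycle_maximal_arrows| = size (primes #[x]).
Proof.
rewrite cardsE (card_uniqP _) ?size_map // map_inj_in_uniq ?primes_uniq // => p q.
rewrite !mem_primes => /and3P[_ _ p_x] /and3P[_ _ q_x] [eXpq].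
by rewrite -(index_cycleX p_x) eXpq index_cycleX.
Qed.

Theorem width_cycle_squarefree : width_is <[x]> (size (primes #[x])).
Proof.
rewrite -card_cycle_maximal_arrows; apply: mgen_card_least.
- move=> a; rewrite inE => /mapP[p]; rewrite mem_primes => /and3P[p_pr _ p_x] -> /=.
  apply: contraTneq (prime_gt1 p_pr) => eXp.
  by rewrite -(index_cycleX p_x) eXp indexgg.
- apply: gen_ts_separating.
    apply/subsetP=> a; rewrite inE => /mapP[p _ ->].
    by rewrite inE /is_arrow /= !(is_subgroup_group _ (cycle_group _)) cycleX subxx.
  move=> H K prHK sKx; have [p p_x sepHK] := cycleX_separating prHK sKx.
  by exists <[x ^+ p]>%G => //; rewrite inE; apply/mapP; exists p.
- move=> S genS; apply/subsetP=> a; rewrite inE => /mapP[p].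
  rewrite mem_primes => /and3P[p_pr _ p_x] ->.
  apply: (maximal_arrow_mem_gen (G := <[x]>%G) (M := <[x ^+ p]>%G)) genS.
    exact: maximal_cycleX.
  by rewrite -sub_abelian_normal ?cycle_abelian ?cycleX.
Qed.

End CyclicSquarefree.

Local Close Scope group_scope.

Section ProductOfDistinctPrimes.
Variables (n : nat) (p : 'I_n -> nat).
Hypothesis p_prime : forall i, prime (p i).

Lemma prime_dvd_prod_primes (P : pred 'I_n) q :
  prime q -> q %| \prod_(i | P i) p i -> exists2 i, P i & q = p i.
Proof.
move=> q_pr; rewrite (Euclid_dvd_prod _ _ _ q_pr) big_has_cond.
by case/hasP=> i _ /andP[Pi]; rewrite dvdn_prime2 // => /eqP ->; exists i.
Qed.

Hypothesis p_inj : injective p.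

Lemma size_primes_prod : size (primes (\prod_(i < n) p i)) = n.
Proof.
have primesE : primes (\prod_(i < n) p i) =i codom p.
  move=> q; rewrite mem_primes; apply/and3P/codomP=> [[q_pr _ q_dvd] | [i ->]].
    by have [i _ ->] := prime_dvd_prod_primes q_pr q_dvd; exists i.
  split; first exact: p_prime.
    by apply: prodn_gt0 => j; apply: prime_gt0.
  by rewrite (bigD1 i) //= dvdn_mulr.
have uniq_p : uniq (codom p) by rewrite codomE map_inj_uniq ?enum_uniq.
by rewrite (perm_size (uniq_perm (primes_uniq _) uniq_p primesE)) size_codom card_ord.
Qed.

Lemma prod_primes_sqfree q : prime q -> ~~ (q ^ 2 %| \prod_(i < n) p i).
Proof.
move=> q_pr; apply/negP=> q2_dvd.
have q_dvd : q %| \prod_(i < n) p i by rewrite (dvdn_trans _ q2_dvd) // -mulnn dvdn_mulr.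
have [i _ eqi] := prime_dvd_prod_primes q_pr q_dvd.
move: q2_dvd; rewrite (bigD1 i) //= eqi -mulnn dvdn_pmul2l ?prime_gt0 //.
by case/prime_dvd_prod_primes=> // j nji /p_inj eij; rewrite eij eqxx in nji.
Qed.

End ProductOfDistinctPrimes.

Theorem lemma5p1 (n : nat) (p : 'I_n -> nat)
  (p_prime : forall i, prime (p i)) (p_distinct : injective p)
  (gT : finGroupType) (G : {group gT})
  (G_cyclic : cyclic G) (G_order : #|G| = \prod_(i < n) p i) :
  width_is G n.
Proof.
have [x defG] := cyclicP G_cyclic.
have ox : #[x]%g = \prod_(i < n) p i by rewrite -G_order defG.
rewrite defG -(size_primes_prod p_prime p_distinct) -ox.
by apply: width_cycle_squarefree => q q_pr; rewrite ox prod_primes_sqfree.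
Qed.
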